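(* For every behavior $r$, $\partial(\partial_{\simeq} r)\simeq\partial_{\simeq} r$, where $\simeq$ is applied to sets of behaviors as defined below.
   Context: Let $\Sigma$ be a finite alphabet. Behaviors are the terms generated by $r,s ::= \phi \mid \varepsilon \mid x\ (x\in\Sigma) \mid r+s \mid r\cdot s \mid r^* \mid \mathrm{fork}(r)$. The concurrent part $\mathcal C(r)$ is the behavior defined by: $\mathcal C(\phi)=\phi$, $\mathcal C(\varepsilon)=\varepsilon$, $\mathcal C(x)=\phi$, $\mathcal C(r+s)=\mathcal C(r)+\mathcal C(s)$, $\mathcal C(r\cdot s)=\mathcal C(r)\cdot\mathcal C(s)$, $\mathcal C(r^* )=\mathcal C(r)^*$, $\mathcal C(\mathrm{fork}(r))=\mathrm{fork}(r)$. The derivative $\partial_x r$ of a behavior $r$ by $x\in\Sigma$ is the behavior defined by: $\partial_x\phi=\phi$, $\partial_x\varepsilon=\phi$, $\partial_x y=\varepsilon$ if $y=x$ and $\phi$ otherwise, $\partial_x(r+s)=\partial_x r+\partial_x s$, $\partial_x(r\cdot s)=\partial_x r\cdot s+\mathcal C(r)\cdot\partial_x s$, $\partial_x(r^* )=\partial_x r\cdot r^*$, $\partial_x(\mathrm{fork}(r))=\mathrm{fork}(\partial_x r)$; it is extended to words by $\partial_\varepsilon r=r$ and $\partial_{xw}r=\partial_w(\partial_x r)$. A descendant of $r$ is any behavior $\partial_w r$ with $w\in\Sigma^*$; $\partial r$ denotes the set of descendants of $r$, and for a set $R$, $\partial R=\bigcup_{r\in R}\partial r$. Similarity $\simeq$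 is the smallest relation on behaviors that is reflexive, symmetric, transitive, closed under contexts (if $s\simeq t$ then $E[s]\simeq E[t]$ for every context $E ::= [\,] \mid E^* \mid E\cdot s \mid r\cdot E \mid E+s \mid r+E \mid \mathrm{fork}(E)$, where $E[t]$ replaces the hole by $t$), and contains the axioms $r+(s+t)\simeq(r+s)+t$, $r+s\simeq s+r$, $r+r\simeq r$, $r+\phi\simeq r$, $\phi+r\simeq r$, $\varepsilon\cdot r\simeq r$, $r\cdot\varepsilon\simeq r$, $\varepsilon^*\simeq\varepsilon$, $\mathrm{fork}(\varepsilon)\simeq\varepsilon$, $\phi\cdot r\simeq\phi$, $r\cdot\phi\simeq\phi$, $\phi^*\simeq\varepsilon$, $\mathrm{fork}(\phi)\simeq\phi$. For sets of behaviors, $R\simeq S$ iff every $r\in R$ is similar to some $s\in S$ and every $s\in S$ is similar to some $r\in R$. The set of dissimilar descendants $\partial_{\simeq} r$ is a set containing exactly one (arbitrarily chosen) representative of each $\simeq$-equivalence class of elements of $\partial r$. *)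

From mathcomp Require Import all_boot.
Set Implicit Arguments. Unset Strict Implicit. Unset Printing Implicit Defensive.

Section Behaviors.
Variable Sigma : finType.

Inductive beh : Type :=
| Phi : beh
| Eps : beh
| Sym : Sigma -> beh
| Plus : beh -> beh -> beh
| Seq : beh -> beh -> beh
| Star : beh -> beh
| Fork : beh -> beh.

Fixpoint conc (r : beh) : beh :=
  match r with
  | Phi => Phi
  | Eps => Eps
  | Sym _ => Phi
  | Plus r s => Plus (conc r) (conc s)
  | Seq r s => Seq (conc r) (conc s)
  | Star r => Star (conc r)
  | Fork r => Fork r
  end.

Fixpoint deriv (x : Sigma) (r : beh) : beh :=
  match r with
  | Phi => Phi
  | Eps => Phi
  | Sym y => if y == x then Eps else Phi
  | Plus r s => Plus (deriv x r) (deriv x s)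
  | Seq r s => Plus (Seq (deriv x r) s) (Seq (conc r) (deriv x s))
  | Star r => Seq (deriv x r) (Star r)
  | Fork r => Fork (deriv x r)
  end.

Fixpoint derivw (w : seq Sigma) (r : beh) : beh :=
  match w with
  | [::] => r
  | x :: w' => derivw w' (deriv x r)
  end.

Definition desc (r s : beh) : Prop := exists w : seq Sigma, s = derivw w r.

Definition descset (R : beh -> Prop) (s : beh) : Prop :=
  exists r, R r /\ desc r s.

Inductive ctx : Type :=
| Hole : ctx
| CStar : ctx -> ctx
| CSeqL : ctx -> beh -> ctx
| CSeqR : beh -> ctx -> ctx
| CPlusL : ctx -> beh -> ctx
| CPlusR : beh -> ctx -> ctx
| CFork : ctx -> ctx.

Fixpoint plug (E : ctx) (t : beh) : beh :=
  match E with
  | Hole => t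
  | CStar E => Star (plug E t)
  | CSeqL E s => Seq (plug E t) s
  | CSeqR r E => Seq r (plug E t)
  | CPlusL E s => Plus (plug E t) s
  | CPlusR r E => Plus r (plug E t)
  | CFork E => Fork (plug E t)
  end.

Inductive sim : beh -> beh -> Prop :=
| sim_refl r : sim r r
| sim_sym r s : sim r s -> sim s r
| sim_trans r s t : sim r s -> sim s t -> sim r t
| sim_ctx E s t : sim s t -> sim (plug E s) (plug E t)
| sim_plusA r s t : sim (Plus r (Plus s t)) (Plus (Plus r s) t)
| sim_plusC r s : sim (Plus r s) (Plus s r)
| sim_plusI r : sim (Plus r r) r
| sim_plus0r r : sim (Plus r Phi) r
| sim_plus0l r : sim (Plus Phi r) r
| sim_seq1l r : sim (Seq Eps r) r
| sim_seq1r r : sim (Seq r Eps) r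
| sim_star1 : sim (Star Eps) Eps
| sim_fork1 : sim (Fork Eps) Eps
| sim_seq0l r : sim (Seq Phi r) Phi
| sim_seq0r r : sim (Seq r Phi) Phi
| sim_star0 : sim (Star Phi) Eps
| sim_fork0 : sim (Fork Phi) Phi.

Definition setsim (R S : beh -> Prop) : Prop :=
  (forall r, R r -> exists2 s, S s & sim r s) /\
  (forall s, S s -> exists2 r, R r & sim r s).

(* D is a set of dissimilar descendants of r: it contains exactly one
   representative of each similarity class of elements of d r. *)
Definition dissim_desc (r : beh) (D : beh -> Prop) : Prop :=
  [/\ (forall s, D s -> desc r s),
      (forall s, desc r s -> exists2 t, D t & sim s t) &
      (forall s t, D s -> D t -> sim s t -> s = t)].

End Behaviors.

From mathcomp Require Import all_boot.

(* Descendants of descendants of r are descendants of r, hence similar to a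
   representative in D; conversely every element of D is its own descendant. *)

Section Descendants.
Context {Sigma : finType}.

Lemma derivw_cat (w1 w2 : seq Sigma) (r : beh Sigma) :
  derivw (w1 ++ w2) r = derivw w2 (derivw w1 r).
Proof. by elim: w1 r => [|x w1 IHw] r //=; rewrite IHw. Qed.

Lemma desc_refl (r : beh Sigma) : desc r r.
Proof. by exists [::]. Qed.

Lemma desc_trans (r s t : beh Sigma) : desc r s -> desc s t -> desc r t.
Proof. by move=> [w1 ->] [w2 ->]; exists (w1 ++ w2); rewrite derivw_cat. Qed.

Lemma descset_sub (R : beh Sigma -> Prop) (s : beh Sigma) : R s -> descset R s.
Proof. by move=> Rs; exists s; split => //; apply: desc_refl. Qed.

Lemma descset_desc {r : beh Sigma} {R : beh Sigma -> Prop} {s : beh Sigma} :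
  (forall t, R t -> desc r t) -> descset R s -> desc r s.
Proof. by move=> descR [t [Rt dts]]; apply: desc_trans (descR t Rt) dts. Qed.

End Descendants.

Theorem lemma12 (Sigma : finType) (r : beh Sigma) (D : beh Sigma -> Prop) :
  dissim_desc r D -> setsim (descset D) D.
Proof.
case=> descD coverD _; split.
- by move=> s /(descset_desc descD) /coverD.
- by move=> s Ds; exists s; [apply: descset_sub | apply: sim_refl].
Qed.
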